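(* Let $(\mathbf{L},\mathbf{R})\in\mathcal{P}_{\mathsf N}$ be centered. Then every contraction map for $(\mathbf{L},\mathbf{R})$ is a dominance map for $(\mathbf{L},\mathbf{R})$. Consequently, if a centered pair admits a contraction map, it admits a dominance map.
   Context: $\mathcal{P}_{\mathsf N}$ denotes the set of pairs $(\mathbf{L},\mathbf{R})$ of $(0,1)$-matrices, $\mathbf{L}$ of size $(\mathsf N+1)\times m_L$ and $\mathbf{R}$ of size $(\mathsf N+1)\times m_R$, such that some index $p\in[\mathsf N+1]$ has row $p$ of $\mathbf{L}$ and row $p$ of $\mathbf{R}$ both zero. $\mathbf{A}_{(i)}$ denotes the $i$-th row; $e$ the all-ones row vector; $|v|=\sum_k|v_k|$; $|x-x'|$ the Hamming distance; $\le$ between vectors is componentwise. The pair is centered if it is balanced ($|\mathbf{L}_{(i)}|=|\mathbf{R}_{(i)}|$ for all $i$) and for some $i$, $\mathbf{L}_{(i)}=e=\mathbf{R}_{(i)}$. A contraction map is $f:\{0,1\}^{m_L}\to\{0,1\}^{m_R}$ with $f(\mathbf{L}_{(i)})=\mathbf{R}_{(i)}$ for all $i$ and $|x-x'|\ge|f(x)-f(x')|$ for all $x,x'$. A dominance map is $f:\{0,1\}^{m_L}\to\{0,1\}^{m_R}$ with $|u|=|f(u)|$ and $\mathbf{L}u^T\le\mathbf{R}f(u)^T$ for all $u\in\{0,1\}^{m_L}$. *)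

(* (0,1)-matrices are boolean matrices; {0,1}^m = 'rV[bool]_m. *)
From mathcomp Require Import all_boot all_order all_algebra.
Set Implicit Arguments. Unset Strict Implicit. Unset Printing Implicit Defensive.

Definition weight (m : nat) (v : 'rV[bool]_m) : nat := \sum_(j < m) nat_of_bool (v ord0 j).

Definition hamming (m : nat) (x y : 'rV[bool]_m) : nat :=
  \sum_(j < m) nat_of_bool (x ord0 j != y ord0 j).

Definition inP (N mL mR : nat) (L : 'M[bool]_(N.+1, mL)) (R : 'M[bool]_(N.+1, mR)) : Prop :=
  exists p : 'I_N.+1, (forall j, L p j = false) /\ (forall k, R p k = false).

Definition balanced (N mL mR : nat) (L : 'M[bool]_(N.+1, mL)) (R : 'M[bool]_(N.+1, mR)) : Prop :=
  forall i : 'I_N.+1, weight (row i L) = weight (row i R).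

Definition centered (N mL mR : nat) (L : 'M[bool]_(N.+1, mL)) (R : 'M[bool]_(N.+1, mR)) : Prop :=
  balanced L R /\ exists i : 'I_N.+1, (forall j, L i j = true) /\ (forall k, R i k = true).

Definition contraction_map (N mL mR : nat) (L : 'M[bool]_(N.+1, mL)) (R : 'M[bool]_(N.+1, mR))
  (f : 'rV[bool]_mL -> 'rV[bool]_mR) : Prop :=
  (forall i : 'I_N.+1, f (row i L) = row i R) /\
  (forall x x' : 'rV[bool]_mL, hamming (f x) (f x') <= hamming x x').

Definition dominance_map (N mL mR : nat) (L : 'M[bool]_(N.+1, mL)) (R : 'M[bool]_(N.+1, mR))
  (f : 'rV[bool]_mL -> 'rV[bool]_mR) : Prop :=
  forall u : 'rV[bool]_mL,
    weight u = weight (f u) /\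
    (forall i : 'I_N.+1,
       \sum_(j < mL) (L i j : nat) * (u ord0 j : nat) <= \sum_(k < mR) (R i k : nat) * (f u ord0 k : nat)).

(** The contraction inequality, applied against the zero row and against the
    all-ones row (which the contraction fixes), gives |f u| <= |u| and
    m - |f u| <= m - |u|, so f preserves weights.  For 0/1 vectors
    2 <a, u> + |a - u| = |a| + |u|; hence for each row i, since |L_i| = |R_i|,
    |u| = |f u| and |R_i - f u| <= |L_i - u|, we get <L_i, u> <= <R_i, f u>. *)
From mathcomp Require Import all_boot all_order all_algebra.
From mathcomp Require Import zify.

Set Implicit Arguments.
Unset Strict Implicit.
Unset Printing Implicit Defensive.

Definition dotb (m : nat) (a b : 'rV[bool]_m) : nat :=
  \sum_(j < m) (a ord0 j : nat) * (b ord0 j : nat).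

Lemma dotb_row (n m : nat) (A : 'M[bool]_(n, m)) (i : 'I_n) (u : 'rV[bool]_m) :
  \sum_(j < m) (A i j : nat) * (u ord0 j : nat) = dotb (row i A) u.
Proof. by apply: eq_bigr => j _; rewrite mxE. Qed.

Lemma dotb_hamming (m : nat) (a b : 'rV[bool]_m) :
  2 * dotb a b + hamming a b = weight a + weight b.
Proof.
rewrite /dotb /hamming /weight big_distrr -!big_split /=.
by apply: eq_bigr => j _; case: (a ord0 j); case: (b ord0 j).
Qed.

Lemma hammingvv (m : nat) (v : 'rV[bool]_m) : hamming v v = 0.
Proof. by rewrite /hamming big1 // => j _; rewrite eqxx. Qed.

Lemma hamming_sym (m : nat) (v w : 'rV[bool]_m) : hamming v w = hamming w v.
Proof. by apply: eq_bigr => j _; rewrite eq_sym. Qed.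

Lemma hammingv0 (m : nat) (v : 'rV[bool]_m) : hamming v (const_mx false) = weight v.
Proof. by apply: eq_bigr => j _; rewrite mxE; case: (v ord0 j). Qed.

Lemma hammingv1 (m : nat) (v : 'rV[bool]_m) : hamming v (const_mx true) + weight v = m.
Proof.
rewrite /hamming /weight -big_split /= (eq_bigr (fun _ => 1)).
  by rewrite sum1_card card_ord.
by move=> j _; rewrite mxE; case: (v ord0 j).
Qed.

Lemma weight1 (m : nat) : weight (const_mx true : 'rV[bool]_m) = m.
Proof. by have := hammingv1 (const_mx true : 'rV[bool]_m); rewrite hammingvv. Qed.

Lemma contraction_weight (mL mR : nat) (f : 'rV[bool]_mL -> 'rV[bool]_mR) :
  mL = mR ->
  f (const_mx false) = const_mx false -> f (const_mx true) = const_mx true ->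
  (forall x x', hamming (f x) (f x') <= hamming x x') ->
  forall u, weight (f u) = weight u.
Proof.
move=> eq_m f0 f1 f_contr u.
have le_w := f_contr u (const_mx false); rewrite f0 !hammingv0 in le_w.
have le_cw := f_contr u (const_mx true); rewrite f1 in le_cw.
have := hammingv1 u; have := hammingv1 (f u); lia.
Qed.

Lemma dotb_le_hamming (mL mR : nat) (a u : 'rV[bool]_mL) (b v : 'rV[bool]_mR) :
  weight a = weight b -> weight u = weight v -> hamming b v <= hamming a u ->
  dotb a u <= dotb b v.
Proof. by have := dotb_hamming a u; have := dotb_hamming b v; lia. Qed.

Lemma row_constE (n m : nat) (A : 'M[bool]_(n, m)) (i : 'I_n) (c : bool) :
  (forall j, A i j = c) -> row i A = const_mx c.
Proof. by move=> Ac; apply/rowP => j; rewrite !mxE. Qed.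

Lemma contraction_is_dominance (N mL mR : nat)
    (L : 'M[bool]_(N.+1, mL)) (R : 'M[bool]_(N.+1, mR)) f :
  inP L R -> centered L R -> contraction_map L R f -> dominance_map L R f.
Proof.
move=> [p [Lp Rp]] [L_R_bal [c [Lc Rc]]] [f_row f_contr].
have eq_m : mL = mR.
  by have := L_R_bal c; rewrite (row_constE Lc) (row_constE Rc) !weight1.
have f0 : f (const_mx false) = const_mx false.
  by rewrite -(row_constE Lp) f_row (row_constE Rp).
have f1 : f (const_mx true) = const_mx true.
  by rewrite -(row_constE Lc) f_row (row_constE Rc).
have f_weight := contraction_weight eq_m f0 f1 f_contr.
move=> u; split=> [|i]; first by rewrite f_weight.
rewrite !dotb_row; apply: dotb_le_hamming; rewrite ?f_weight //.
by rewrite -f_row hamming_sym [X in _ <= X]hamming_sym f_contr.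
Qed.

Theorem corollary2 (N mL mR : nat) (L : 'M[bool]_(N.+1, mL)) (R : 'M[bool]_(N.+1, mR)) :
  inP L R -> centered L R ->
  (forall f : 'rV[bool]_mL -> 'rV[bool]_mR, contraction_map L R f -> dominance_map L R f) /\
  ((exists f, contraction_map L R f) -> exists g, dominance_map L R g).
Proof.
move=> LR_P LR_centered.
have dom f := @contraction_is_dominance _ _ _ L R f LR_P LR_centered.
by split=> // -[f f_contr]; exists f; apply: dom.
Qed.
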